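(* Let $n$ be even, let $r\le s\le 2r-1$, and let $m=s-r+1$ (the number of edges of $P^{(r)}_s$). Then $$\tau(n,P^{(r)}_s)\le \tau(n,LP^{(r)}_s)\le 2h(n,r,m)+h(n,r-1,m).$$
   Context: An ordered $r$-uniform hypergraph is an $r$-uniform hypergraph whose vertex set is linearly ordered. $K^{(r)}_n$ denotes the ordered complete $r$-uniform hypergraph on vertex set $[n]=\{1,\dots,n\}$ (natural order), whose edges are all $r$-subsets of $[n]$. A copy of an ordered hypergraph $H$ in $K^{(r)}_n$ is the image of $H$ under an order-preserving injection $f:V(H)\to[n]$ (its edges being the images $f(e)$, $e\in E(H)$). The natural (tight) path $P^{(r)}_s$ has vertices $v_1<\dots<v_s$ and its edges are all sets of $r$ consecutive vertices $\{v_j,\dots,v_{j+r-1}\}$, $1\le j\le s-r+1$. The loose path $LP^{(r)}_s$ is obtained from $P^{(r)}_s$ by keeping only its first edge $\{v_1,\dots,v_r\}$ and its last edge $\{v_{s-r+1},\dots,v_s\}$ (same vertex set and order). For an ordered $r$-uniform $H$, an $H$-transversal is a set of edges of $K^{(r)}_n$ meeting (the edge set of) every copy of $H$ in $K^{(r)}_n$, and $\tau(n,H)$ is the minimum size of an $H$-transversal. An interval partition $(X,Y,Z)$ of $[n]$ consists of consecutive (possibly empty) intervals $X<Y<Z$ with union $[n]$. A set $S\subseteq[n]$ is $m$-left-biased if there is an interval partition $(X,Y,Z)$ of $[n]$ with $|X|=|Z|$, $|X\cap S|=m$ and $|Z\cap S|=0$. $h(n,t,m)$ denotes the number of $t$-subsets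 of $[n]$ that are $m$-left-biased. *)

From mathcomp Require Import all_boot.
Set Implicit Arguments. Unset Strict Implicit. Unset Printing Implicit Defensive.

(* Vertex set [n] is represented by 'I_n = {0,...,n-1} with its natural order
   (order-isomorphic to {1,...,n}).  An ordered r-uniform hypergraph on s
   vertices is an edge set E : {set {set 'I_s}}. *)

(* order-preserving injection = strictly increasing map *)
Definition strict_incr s n (f : {ffun 'I_s -> 'I_n}) : bool :=
  [forall i : 'I_s, forall j : 'I_s, (i < j) ==> (f i < f j)].

Definition is_transversal n r s (E : {set {set 'I_s}}) (T : {set {set 'I_n}}) : bool :=
  [forall e in T, #|e| == r] &&
  [forall f : {ffun 'I_s -> 'I_n}, strict_incr f ==> [exists e in E, (f @: e) \in T]].

Definition rsets n r : {set {set 'I_n}} := [set e : {set 'I_n} | #|e| == r].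

(* tau(n,H): minimum size of an H-transversal (the default value #|rsets n r|
   is an upper bound on the size of every transversal) *)
Definition tau n r s (E : {set {set 'I_s}}) : nat :=
  \big[minn/#|rsets n r|]_(T : {set {set 'I_n}} | is_transversal r E T) #|T|.

Definition seg s j r : {set 'I_s} := [set i : 'I_s | (j <= i) && (i < j + r)].

Definition tight_path r s : {set {set 'I_s}} :=
  [set e : {set 'I_s} | [exists j : 'I_s.+1, (j + r <= s) && (e == seg s j r)]].

Definition loose_path r s : {set {set 'I_s}} := [set seg s 0 r; seg s (s - r) r].

(* S is m-left-biased: there is an interval partition (X,Y,Z) of [n] with
   |X| = |Z| = a, i.e. X = [0,a), Z = [n-a,n), 2a <= n,
   |X ∩ S| = m and Z ∩ S = ∅. *)
Definition left_biased n m (S : {set 'I_n}) : bool :=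
  [exists a : 'I_n.+1, (a + a <= n) &&
     (#|[set i in S | i < a]| == m) && ([set i in S | n - a <= i] == set0)].

Definition h n t m : nat := #|[set S : {set 'I_n} | (#|S| == t) && left_biased m S]|.

From HB Require Import structures.
From Pilot Require Import Defs.
From mathcomp Require Import all_boot zify.
Set Implicit Arguments. Unset Strict Implicit. Unset Printing Implicit Defensive.

(* Let x be the first vertex of the last edge of a loose-path copy (it is also
   the m-th vertex of the first edge) and y the last vertex of the first edge.
   If x + y < n - 1 the first edge is m-left-biased, with X = [0, x]; if
   x + y > n - 1 the mirror image of the last edge is.  If x + y = n - 1, then
   x < y because n is even, the first edge minus y is an m-left-biased
   (r-1)-set, and y is the mirror image n - 1 - x of its m-th element.  So the
   m-left-biased r-sets, their mirror images and the (r-1)-sets completed in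
   this way form a transversal; the tight path contains the loose path. *)

HB.instance Definition _ := SemiGroup.isComLaw.Build nat minn minnA minnC.

Section Tau.
Variables n r s : nat.
Implicit Types (E : {set {set 'I_s}}) (T : {set {set 'I_n}}).

Lemma tau_le_card E T : Defs.is_transversal r E T -> tau n r E <= #|T|.
Proof.
by move=> TE; rewrite /tau (big_rem_AC _ _ _ _ (mem_index_enum T)) TE geq_minl.
Qed.

Lemma tau_le_rsets E : tau n r E <= #|rsets n r|.
Proof.
apply: (big_ind (fun k => k <= #|rsets n r|)) => // [k l kr _|T /andP[/forall_inP Tr _]].
  by rewrite geq_min kr.
by apply/subset_leq_card/subsetP => e /Tr; rewrite inE.
Qed.

Lemma tau_subgraph E E' : E \subset E' -> tau n r E' <= tau n r E.
Proof.
move=> sEE'; apply: (big_ind (fun k => tau n r E' <= k)) => [|k l ? ?|T /andP[Tr TE]].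
- exact: tau_le_rsets.
- by rewrite leq_min; apply/andP.
apply: tau_le_card; rewrite /Defs.is_transversal Tr /=.
apply/forall_inP => f /(forall_inP TE) /exists_inP[e eE fe].
by apply/exists_inP; exists e; first exact: (subsetP sEE').
Qed.

End Tau.

Lemma loose_path_sub_tight_path r s : r <= s -> loose_path r s \subset tight_path r s.
Proof.
move=> r_le_s; apply/subsetP => e; rewrite !inE => /orP[]/eqP->; apply/existsP.
  by exists ord0; rewrite r_le_s eqxx.
have lt_s1 : s - r < s.+1 by rewrite ltnS leq_subr.
by exists (Ordinal lt_s1); rewrite /= subnK // leqnn eqxx.
Qed.

Section Segments.
Variable s : nat.

Lemma segS lo len (lt_s : lo + len < s) : seg s lo len.+1 = Ordinal lt_s |: seg s lo len.
Proof. by apply/setP => i; rewrite !inE -val_eqE /=; lia. Qed.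

Lemma card_seg lo len : lo + len <= s -> #|seg s lo len| = len.
Proof.
elim: len => [_|len IH lt_s].
  by apply/eqP; rewrite cards_eq0; apply/eqP/setP => i; rewrite !inE; lia.
rewrite -addSnnS in lt_s; rewrite segS cardsU1 IH ?inE /=; lia.
Qed.

Lemma imset_rev_seg lo len :
  lo + len <= s -> @rev_ord s @: seg s lo len = seg s (s - (lo + len)) len.
Proof.
move=> le_s; apply/setP => i; rewrite inE -[i]rev_ordK mem_imset; last exact: rev_ord_inj.
by rewrite !inE /=; have := ltn_ord i; lia.
Qed.

End Segments.

Lemma left_biased_intro n m (S : {set 'I_n}) a :
  a + a <= n -> #|[set i in S | i < a]| = m -> {in S, forall i : 'I_n, i < n - a} ->
  left_biased m S.
Proof.
move=> le_n card_below below_n; have lt_n1 : a < n.+1 by lia.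
apply/existsP; exists (Ordinal lt_n1); rewrite /= le_n card_below eqxx /=.
by apply/eqP/setP => i; rewrite !inE; apply/negbTE/andP => -[/below_n]; lia.
Qed.

Section StrictlyIncreasing.
Variables (s n : nat) (f : {ffun 'I_s -> 'I_n}).
Hypothesis f_incr : strict_incr f.

Lemma strict_incr_ltE i j : (f i < f j) = (i < j).
Proof.
have incr (k l : 'I_s) : k < l -> f k < f l.
  by move=> lt_kl; exact: (implyP (forallP (forallP f_incr k) l)).
case: (ltngtP i j) => [/incr //|/incr|/val_inj->]; last by rewrite ltnn.
by move=> lt_ji; apply/negbTE; rewrite -leqNgt ltnW.
Qed.

Lemma strict_incr_leE i j : (f i <= f j) = (i <= j).
Proof. by rewrite leqNgt strict_incr_ltE -leqNgt. Qed.

Lemma strict_incr_inj : injective f.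
Proof. by move=> i j fij; apply/val_inj/eqP; rewrite eqn_leq -!strict_incr_leE fij leqnn. Qed.

Lemma card_prefix_le (j : 'I_s) k :
  j < k <= s -> #|[set i in f @: seg s 0 k | i <= f j]| = j.+1.
Proof.
move=> /andP[lt_jk le_ks].
have -> : [set i in f @: seg s 0 k | i <= f j] = f @: seg s 0 j.+1.
  apply/setP => i; rewrite inE; apply/andP/imsetP => [[/imsetP[c c_k ->]]|[c c_j ->]].
    by rewrite strict_incr_leE => le_cj; exists c; rewrite // inE; lia.
  by rewrite imset_f ?strict_incr_leE; move: c_j; rewrite !inE; lia.
by rewrite card_imset ?card_seg //; [lia | exact: strict_incr_inj].
Qed.

Lemma prefix_left_biased (j l : 'I_s) :
  j <= l -> f j + f l + 2 <= n -> left_biased j.+1 (f @: seg s 0 l.+1).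
Proof.
move=> le_jl le_n; have le_fjl : f j <= f l by rewrite strict_incr_leE.
apply: (left_biased_intro (a := (f j).+1)); first lia.
  by apply: card_prefix_le; rewrite ltnS le_jl ltn_ord.
move=> _ /imsetP[c + ->]; rewrite inE => c_l.
have : f c <= f l by rewrite strict_incr_leE; lia.
lia.
Qed.

End StrictlyIncreasing.

Section Reversal.
Variables (s n : nat) (f : {ffun 'I_s -> 'I_n}).

Definition rev_copy : {ffun 'I_s -> 'I_n} := [ffun i => rev_ord (f (rev_ord i))].

Lemma rev_copy_strict_incr : strict_incr f -> strict_incr rev_copy.
Proof.
move=> f_incr; apply/forallP => i; apply/forallP => j; apply/implyP => lt_ij.
rewrite !ffunE /=; have := ltn_ord (f (rev_ord i)); have := ltn_ord (f (rev_ord j)).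
have : f (rev_ord j) < f (rev_ord i) by rewrite strict_incr_ltE //=; have := ltn_ord j; lia.
lia.
Qed.

Lemma imset_rev_copy_seg lo len : lo + len <= s ->
  @rev_ord n @: (rev_copy @: seg s lo len) = f @: seg s (s - (lo + len)) len.
Proof.
move=> le_s; rewrite -imset_rev_seg // -!imset_comp.
by apply: eq_imset => i /=; rewrite ffunE rev_ordK.
Qed.

End Reversal.

(* Counting from 1: [nth_smallest S 1] is the least element of [S]. *)
Definition nth_smallest n (S : {set 'I_n}) k : option 'I_n :=
  [pick x in S | #|[set y in S | y <= x]| == k].

Lemma nth_smallest_rank n (S : {set 'I_n}) x :
  x \in S -> nth_smallest S #|[set y in S | y <= x]| = Some x.
Proof.
have rank_lt (u v : 'I_n) :
    v \in S -> u < v -> #|[set y in S | y <= u]| < #|[set y in S | y <= v]|.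
  move=> vS lt_uv; apply/proper_card/properP; split.
    by apply/subsetP => w; rewrite !inE => /andP[-> le_wu]; exact: leq_trans (ltnW lt_uv).
  by exists v; rewrite !inE vS /=; lia.
move=> xS; rewrite /nth_smallest; case: pickP => [y /andP[yS /eqP rank_yx]|/(_ x)].
  by congr Some; case: (ltngtP y x) => [/(rank_lt _ _ xS)|/(rank_lt _ _ yS)|/val_inj];
    rewrite ?rank_yx ?ltnn.
by rewrite xS eqxx.
Qed.

Section BiasedTransversal.
Variables n r m : nat.

Definition biased_sets t : {set {set 'I_n}} :=
  [set S : {set 'I_n} | (#|S| == t) && left_biased m S].

Definition add_mirror (S : {set 'I_n}) : {set 'I_n} :=
  if nth_smallest S m is Some x then rev_ord x |: S else S.

Definition biased_transversal : {set {set 'I_n}} :=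
  [set e in biased_sets r :|: [set @rev_ord n @: S | S : {set 'I_n} in biased_sets r]
            :|: [set add_mirror S | S : {set 'I_n} in biased_sets (r - 1)] | #|e| == r].

Lemma card_biased_transversal : #|biased_transversal| <= 2 * h n r m + h n (r - 1) m.
Proof.
rewrite /biased_transversal setIdE; apply: leq_trans (subset_leq_card (subsetIl _ _)) _.
apply: (leq_trans (leq_card_setU _ _).1); rewrite mul2n -addnn.
apply: leq_add; last exact: leq_imset_card.
apply: (leq_trans (leq_card_setU _ _).1); rewrite leq_add2l; exact: leq_imset_card.
Qed.

Lemma biased_sets_sub_transversal S : S \in biased_sets r -> S \in biased_transversal.
Proof. by rewrite !inE => /andP[-> ->]. Qed.

Lemma rev_biased_sets_sub_transversal S :
  S \in biased_sets r -> @rev_ord n @: S \in biased_transversal.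
Proof.
move=> Sr; rewrite !inE imset_f ?orbT ?card_imset //; last exact: rev_ord_inj.
by move: Sr; rewrite inE => /andP[].
Qed.

Lemma add_mirror_sub_transversal S :
  S \in biased_sets (r - 1) -> #|add_mirror S| = r -> add_mirror S \in biased_transversal.
Proof. by move=> Sr1 card_r; rewrite !inE imset_f // orbT card_r eqxx. Qed.

End BiasedTransversal.

Section LoosePathCopies.
Variables n r s : nat.
Hypotheses (n_even : ~~ odd n) (r_gt0 : 0 < r) (r_le_s : r <= s) (s_lt_2r : s < 2 * r).
Let m := s - r + 1.

Fact last_start_subproof : s - r < s. Proof. lia. Qed.
Fact first_end_subproof : r - 1 < s. Proof. lia. Qed.
Let last_start := Ordinal last_start_subproof.
Let first_end := Ordinal first_end_subproof.

Lemma first_edge_biased f : strict_incr f ->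
  f last_start + f first_end + 2 <= n -> f @: seg s 0 r \in biased_sets n m r.
Proof.
move=> f_incr le_n; rewrite inE card_imset ?card_seg ?eqxx //=; last exact: strict_incr_inj.
have le_pos : last_start <= first_end by rewrite /=; lia.
have := prefix_left_biased f_incr le_pos le_n.
by rewrite /= /m addn1 (_ : (r - 1).+1 = r) //; lia.
Qed.

Lemma first_edge_mirror_completion f : strict_incr f ->
  f last_start + f first_end = n.-1 -> f @: seg s 0 r \in biased_transversal n r m.
Proof.
move=> f_incr eq_n; have f_inj := strict_incr_inj f_incr.
have lt_pos : s - r < r - 1.
  rewrite ltn_neqAle (_ : s - r <= r - 1) ?andbT; last lia.
  apply/eqP => eq_pos; have same : last_start = first_end by apply: val_inj.
  rewrite same addnn in eq_n.
  have n_gt0 : 0 < n by exact: leq_ltn_trans (leq0n _) (ltn_ord (f first_end)).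
  by move: n_even; rewrite -(prednK n_gt0) -eq_n /= odd_double.
have lt_r2 : r - 2 < s by lia.
pose prefix := f @: seg s 0 (r - 1).
have prefix_biased : prefix \in biased_sets n m (r - 1).
  rewrite inE card_imset ?card_seg ?eqxx //=; last lia.
  have := prefix_left_biased f_incr (j := last_start) (l := Ordinal lt_r2).
  rewrite /= /m addn1 (_ : (r - 2).+1 = r - 1); last lia.
  apply; first by rewrite /=; lia.
  have : f (Ordinal lt_r2) < f first_end by rewrite strict_incr_ltE //=; lia.
  lia.
have mirror : add_mirror m prefix = f @: seg s 0 r.
  rewrite /add_mirror (_ : m = #|[set y in prefix | y <= f last_start]|); last first.
    by rewrite card_prefix_le /m ?addn1 //=; lia.
  rewrite nth_smallest_rank; last by rewrite imset_f // inE /=; lia.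
  have -> : rev_ord (f last_start) = f first_end.
    by apply: val_inj => /=; have := ltn_ord (f first_end); lia.
  rewrite (_ : seg s 0 r = first_end |: seg s 0 (r - 1)) ?imsetU1 //.
  by apply/setP => i; rewrite !inE -val_eqE /=; lia.
rewrite -mirror; apply: add_mirror_sub_transversal => //.
by rewrite mirror card_imset ?card_seg.
Qed.

Lemma loose_path_copy_meets f : strict_incr f ->
  [exists e in loose_path r s, f @: e \in biased_transversal n r m].
Proof.
move=> f_incr; apply/exists_inP.
have [lt_n|gt_n|eq_n] := ltngtP (f last_start + f first_end) n.-1.
- exists (seg s 0 r); first by rewrite !inE eqxx.
  apply/biased_sets_sub_transversal/first_edge_biased => //; lia.
- exists (seg s (s - r) r); first by rewrite !inE eqxx orbT.
  have := imset_rev_copy_seg f (lo := 0) (len := r); rewrite add0n => <- //.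
  apply/rev_biased_sets_sub_transversal/first_edge_biased; first exact: rev_copy_strict_incr.
  rewrite !ffunE.
  have -> : rev_ord last_start = first_end by apply: val_inj => /=; lia.
  have -> : rev_ord first_end = last_start by apply: val_inj => /=; lia.
  by rewrite /=; have := ltn_ord (f first_end); have := ltn_ord (f last_start); lia.
exists (seg s 0 r); first by rewrite !inE eqxx.
exact: first_edge_mirror_completion.
Qed.

Lemma biased_transversal_is_transversal :
  Defs.is_transversal r (loose_path r s) (biased_transversal n r m).
Proof.
apply/andP; split; first by apply/forall_inP => e; rewrite inE => /andP[].
by apply/forallP => f; apply/implyP => /loose_path_copy_meets.
Qed.

End LoosePathCopies.

Unset Implicit Arguments.
Theorem theorem2p1 (n r s m : nat) :
  ~~ odd n -> 0 < r -> r <= s -> s <= 2 * r - 1 -> m = s - r + 1 ->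
  tau n r (tight_path r s) <= tau n r (loose_path r s) /\
  tau n r (loose_path r s) <= 2 * h n r m + h n (r - 1) m.
Proof.
move=> n_even r_gt0 r_le_s s_le ->; split.
  exact/tau_subgraph/loose_path_sub_tight_path.
apply: leq_trans (card_biased_transversal n r _).
by apply/tau_le_card/biased_transversal_is_transversal => //; lia.
Qed.
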